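(* Suppose the dataset $\{(\mathbf{x}_i,y_i)\}_{i=1}^m$ ($\mathbf{x}_i\in\mathbb{R}^d$) is sampled i.i.d. from some distribution. Then for any $\delta\in(0,1)$, with probability at least $1-\delta$ over the sample, the following holds: for any invertible $M\in\mathbb{R}^{d\times d}$ and linearly-invariant algorithm (or any orthogonal $M$ and orthogonally-invariant algorithm), conditioned on the algorithm's internal randomness, the matrices $W$ and $W_M$ returned on the original data and on the data transformed by $M$ respectively satisfy \[ \Pr_{\mathbf{x}}(W_M^\top M\mathbf{x}\ne W^\top\mathbf{x})\le\frac{d}{\delta(m+1)}, \] where $\mathbf{x}$ is a fresh sample from the same distribution.
   Context: An algorithm takes a dataset $\{(\mathbf{x}_i,y_i)\}_{i=1}^m$ and outputs a predictor $\mathbf{x}\mapsto f(W^\top\mathbf{x})$. It is orthogonally-invariant (resp. linearly-invariant) if for every orthogonal (resp. invertible) $M\in\mathbb{R}^{d\times d}$, when fed $\{(M\mathbf{x}_i,y_i)\}$ it returns $\mathbf{x}\mapsto f(W_M^\top\mathbf{x})$ with the same $f$ and $W_M^\top M\mathbf{x}_i=W^\top\mathbf{x}_i$ for all $i$ in the dataset (for randomized algorithms, conditioned on each realization of the internal randomness). *)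

From HB Require Import structures.
From mathcomp Require Import all_boot all_order all_algebra.
From mathcomp Require Import all_classical all_reals all_analysis.
Set Implicit Arguments. Unset Strict Implicit. Unset Printing Implicit Defensive.
Import Order.TTheory GRing.Theory Num.Theory.
Local Open Scope ring_scope.
Local Open Scope classical_set_scope.

(* A (possibly randomized) algorithm with internal randomness in Xi, taking a
   dataset of pairs (x_i, y_i) with x_i in R^d (column vectors) and outputting
   a predictor x |-> f (W^T x), represented by the pair (f, W) with
   W : 'M_(d,k) and f : 'cV_k -> Out. *)
Definition algorithm (R : ringType) (d k : nat) (Y Xi Out : Type) :=
  Xi -> seq ('cV[R]_d * Y) -> ('cV[R]_k -> Out) * 'M[R]_(d, k).

Definition transform_data (R : ringType) (d : nat) (Y : Type) (M : 'M[R]_d)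
  (S : seq ('cV[R]_d * Y)) : seq ('cV[R]_d * Y) :=
  [seq (M *m p.1, p.2) | p <- S].

Definition invariant_for (R : ringType) (d k : nat) (Y Xi Out : Type)
  (A : algorithm R d k Y Xi Out) (M : 'M[R]_d) : Prop :=
  forall (xi : Xi) (S : seq ('cV[R]_d * Y)),
    (A xi (transform_data M S)).1 = (A xi S).1 /\
    forall p, p \in map fst S ->
      (A xi (transform_data M S)).2^T *m (M *m p) = (A xi S).2^T *m p.

Definition orthogonal_mx (R : ringType) (d : nat) (M : 'M[R]_d) : Prop :=
  M^T *m M = 1%:M.

Definition orthogonally_invariant (R : comUnitRingType) (d k : nat)
  (Y Xi Out : Type) (A : algorithm R d k Y Xi Out) : Prop :=
  forall M : 'M[R]_d, orthogonal_mx M -> invariant_for A M.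

Definition linearly_invariant (R : comUnitRingType) (d k : nat)
  (Y Xi Out : Type) (A : algorithm R d k Y Xi Out) : Prop :=
  forall M : 'M[R]_d, M \in unitmx -> invariant_for A M.

Definition mutually_independent (dO dT : measure_display) (R : realType)
  (Om : measurableType dO) (T : measurableType dT) (P : probability Om R)
  (n : nat) (Z : 'I_n -> Om -> T) : Prop :=
  forall A : 'I_n -> set T, (forall i, measurable (A i)) ->
    P (\bigcap_(i in [set: 'I_n]) (Z i @^-1` A i)) =
    (\prod_(i < n) P (Z i @^-1` A i))%E.

Definition disagree (R : ringType) (d k : nat) (T : Type) (feat : T -> 'cV[R]_d)
  (M : 'M[R]_d) (W WM : 'M[R]_(d, k)) : set T :=
  [set z | WM^T *m (M *m feat z) != W^T *m feat z].

(* Let V_t be the span of the features of the first t samples and q_t the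
   mu-mass of the points whose feature lies outside V_t.  Two predictors
   returned by an invariant algorithm agree on the sample, hence on V_m, so
   they disagree on a set of mass at most q_m; it remains to show that
   q_m <= d / (delta (m + 1)) with probability at least 1 - delta.
   Call sample t novel when its feature lies outside V_t.  Each novel sample
   raises dim V_t, so there are at most dim V_m of them; as q_m <= 1, and
   q_m = 0 once dim V_m = d, pointwise #novel + q_m <= d.  Sample t is
   independent of the earlier ones, so it is novel with probability
   E[q_t] >= E[q_m].  Taking expectations gives (m + 1) E[q_m] <= d, and
   Markov's inequality concludes. *)

From HB Require Import structures.
From mathcomp Require Import all_boot all_order all_algebra.
From mathcomp Require Import all_classical all_reals all_analysis.
From mathcomp Require Import measurable_realfun.
From mathcomp Require Import ring.
Import Order.TTheory GRing.Theory Num.Theory.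
Local Open Scope ring_scope.
Local Open Scope classical_set_scope.

Set Implicit Arguments.

Section rank_minors.
Context {F : fieldType}.

Lemma exists_rank_minor m n (A : 'M[F]_(m, n)) :
  exists (f : 'I_(\rank A) -> 'I_m) (g : 'I_(\rank A) -> 'I_n),
    \det (mxsub f g A) != 0.
Proof.
have tr_full : row_full (rowsub (maxrankfun A) A)^T.
  by rewrite /row_full mxrank_tr; exact: maxrowsub_free.
exists (maxrankfun A), (fullrankfun tr_full).
have -> : mxsub (maxrankfun A) (fullrankfun tr_full) A =
          (rowsub (fullrankfun tr_full) (rowsub (maxrankfun A) A)^T)^T.
  by apply/matrixP => i j; rewrite !mxE.
by rewrite det_tr -unitfE -unitmxE fullrowsub_unit.
Qed.

Lemma rank_ge_minor m n s (A : 'M[F]_(m, n)) (f : 'I_s -> 'I_m) (g : 'I_s -> 'I_n) :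
  \det (mxsub f g A) != 0 -> (s <= \rank A)%N.
Proof.
rewrite -unitfE -unitmxE => /mxrank_unit <-.
have -> : mxsub f g A = rowsub f (rowsub g A^T)^T by apply/matrixP => i j; rewrite !mxE.
rewrite (leq_trans (mxrankS (rowsub_sub _ _))) // mxrank_tr.
by rewrite -[leqRHS]mxrank_tr mxrankS ?rowsub_sub.
Qed.

Lemma notsubmx_rank_col_mx m n (A : 'M[F]_(m, n)) (v : 'rV_n) :
  ~~ (v <= A)%MS = (\rank A < \rank (col_mx A v))%N.
Proof.
rewrite -addsmxE (ltn_leqif (mxrank_leqif_sup (addsmxSl A v))).
by rewrite addsmx_sub submx_refl.
Qed.

Lemma sum_notsub_le_rank d (n : nat -> nat) (V : forall t, 'M[F]_(n t, d)) s
    (x : 'I_s -> 'rV_d) :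
  (forall t : 'I_s, (V t <= V t.+1)%MS) -> (forall t : 'I_s, (x t <= V t.+1)%MS) ->
  (\sum_(t < s) ~~ (x t <= V t)%MS <= \rank (V s))%N.
Proof.
elim: s x => [|s IHs] x V_incr x_sub; first by rewrite big_ord0.
rewrite big_ord_recr /=.
have VsS := V_incr ord_max; have xsS := x_sub ord_max.
have IH := IHs (x \o widen_ord (leqnSn s))
  (fun t => V_incr (widen_ord (leqnSn s) t)) (fun t => x_sub (widen_ord (leqnSn s) t)).
have [xVs | xVsN] /= := boolP (x ord_max <= V s)%MS.
  by rewrite addn0 (leq_trans IH) // mxrankS.
rewrite addn1 (leq_ltn_trans IH) // rank_ltmx // ltmxE VsS /=.
by apply: contra xVsN => /(submx_trans xsS).
Qed.

Lemma mulmx_eq0_rowspace k m d (N : 'M[F]_(k, d)) (V : 'M[F]_(m, d)) (v : 'cV_d) :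
  V *m N^T = 0 -> (v^T <= V)%MS -> N *m v = 0.
Proof.
move=> /eqP; rewrite -sub_kermx => VkerN /submx_trans/(_ VkerN).
by rewrite sub_kermx -trmx_mul => /eqP/(congr1 trmx); rewrite trmxK trmx0.
Qed.

End rank_minors.

Section measurable_matrix.
Context {d : measure_display} {X : measurableType d} {R : realType}.

Definition measurable_mx m n (F : X -> 'M[R]_(m, n)) :=
  forall i j, measurable_fun setT (fun x => F x i j).

Lemma measurable_mx_mulmx k m n (A : 'M[R]_(k, m)) (F : X -> 'M[R]_(m, n)) :
  measurable_mx F -> measurable_mx (fun x => A *m F x).
Proof.
move=> mF i j; under eq_fun do rewrite mxE.
by apply: measurable_sum => l; apply: measurable_funM; [exact: measurable_cst|].
Qed.

Lemma measurable_mx_col_mx m1 m2 n (F1 : X -> 'M[R]_(m1, n)) (F2 : X -> 'M[R]_(m2, n)) :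
  measurable_mx F1 -> measurable_mx F2 -> measurable_mx (fun x => col_mx (F1 x) (F2 x)).
Proof.
move=> mF1 mF2 i j; under eq_fun do rewrite mxE.
by case: (fintype.split i) => k; [exact: mF1 | exact: mF2].
Qed.

Lemma measurable_fun_det n (F : X -> 'M[R]_n) :
  measurable_mx F -> measurable_fun setT (fun x => \det (F x)).
Proof.
move=> mF; rewrite /determinant; apply: measurable_sum => s.
apply: measurable_funM; first exact: measurable_cst.
by apply: measurable_prod => i _; exact: mF.
Qed.

Lemma measurable_det_neq0 n (F : X -> 'M[R]_n) :
  measurable_mx F -> measurable [set x | \det (F x) != 0].
Proof.
move=> mF; have -> : [set x | \det (F x) != 0] = (fun x => \det (F x)) @^-1` ~` [set 0].
  by apply/seteqP; split => x /= /eqP.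
rewrite -[X in measurable X]setTI; apply: measurable_fun_det => //.
by apply: measurableC; exact: measurable_set1.
Qed.

Lemma measurable_rank_ge m n (F : X -> 'M[R]_(m, n)) r :
  measurable_mx F -> measurable [set x | (r <= \rank (F x))%N].
Proof.
move=> mF; have -> : [set x | (r <= \rank (F x))%N] =
    \bigcup_(s in [set s : 'I_m.+1 | (r <= s)%N])
      \bigcup_(f in [set: {ffun 'I_s -> 'I_m}]) \bigcup_(g in [set: {ffun 'I_s -> 'I_n}])
        [set x | \det (mxsub f g (F x)) != 0].
  apply/seteqP; split => x /= => [r_le|[s /= r_le [f _ [g _ /= /rank_ge_minor]]]];
    last exact: leq_trans.
  have [f [g minor_neq0]] := exists_rank_minor (F x).
  exists (Ordinal (rank_leq_row (F x) : \rank (F x) < m.+1)%N) => //.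
  exists (finfun f) => //; exists (finfun g) => //=.
  rewrite (_ : mxsub _ _ _ = mxsub f g (F x)) //.
  by apply/matrixP => i j; rewrite !mxE !ffunE.
do 3!(apply: fin_bigcup_measurable; first exact: finite_finset; move=> ? _).
by apply: measurable_det_neq0 => i j; under eq_fun do rewrite mxE; exact: mF.
Qed.

Lemma measurable_rank_lt m1 m2 n (F1 : X -> 'M[R]_(m1, n)) (F2 : X -> 'M[R]_(m2, n)) :
  measurable_mx F1 -> measurable_mx F2 ->
  measurable [set x | (\rank (F1 x) < \rank (F2 x))%N].
Proof.
move=> mF1 mF2.
have -> : [set x | (\rank (F1 x) < \rank (F2 x))%N] =
    \bigcup_r ([set x | (r <= \rank (F2 x))%N] `\` [set x | (r <= \rank (F1 x))%N]).
  apply/seteqP; split => x /=.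
    by move=> lt12; exists (\rank (F2 x)) => //; split => //=; apply/negP; rewrite -ltnNge.
  by move=> [r _ [/= le2 /negP]]; rewrite -ltnNge => /leq_trans; apply.
by apply: bigcupT_measurable => r; apply: measurableD; exact: measurable_rank_ge.
Qed.

Lemma measurable_mx_neq0 m n (F : X -> 'M[R]_(m, n)) :
  measurable_mx F -> measurable [set x | F x != 0].
Proof.
move=> mF; under eq_set do rewrite -mxrank_eq0 -lt0n.
exact: measurable_rank_ge.
Qed.

End measurable_matrix.

Section tuple_cylinders.
Context {d : measure_display} {T : measurableType d} {R : realType} {n : nat}.

Definition cylinder (A : nat -> set T) : set (n.-tuple T) :=
  [set y | forall i : 'I_n, A i (tnth y i)].

Definition cylinders : set (set (n.-tuple T)) :=
  [set cylinder A | A in [set A | forall i, measurable (A i)]].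

Lemma measurable_cylinder A : (forall i, measurable (A i)) -> measurable (cylinder A).
Proof.
move=> mA.
have -> : cylinder A = \bigcap_(i in [set: 'I_n]) ((fun y => tnth y i) @^-1` A i).
  by apply/seteqP; split => y /= Ay i => [_|]; [exact: Ay | exact: Ay].
apply: fin_bigcap_measurable; first exact: finite_finset.
by move=> i _; rewrite -[X in measurable X]setTI; exact: measurable_tnth.
Qed.

Lemma measurable_tupleE : @measurable _ (n.-tuple T) = <<s cylinders >>.
Proof.
apply/seteqP; split; last first.
  apply: smallest_sub; first exact: sigma_algebra_measurable.
  by move=> _ [A mA <-]; exact: measurable_cylinder.
apply: smallest_sub; first exact: smallest_sigma_algebra.
move=> B; elim/big_ind: _ => // [B1 B2 IH1 IH2 [/IH1|/IH2] //|i _ [C mC <-]].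
apply: sub_sigma_algebra.
exists (fun j => if j == i :> nat then C else setT) => [j|]; first by case: ifP.
apply/seteqP; split => y /=; first by move=> /(_ i); rewrite eqxx.
by move=> [_ Cy] j; case: eqP => // /val_inj ->.
Qed.

Lemma tuple_measure_unique (m1 m2 : {measure set (n.-tuple T) -> \bar R}) :
  (m1 setT < +oo)%E -> {in cylinders, m1 =1 m2} ->
  forall B, measurable B -> m1 B = m2 B.
Proof.
move=> m1_fin m12; apply: (measure_unique cylinders (fun=> setT)) => //.
- exact: measurable_tupleE.
- move=> _ _ [A1 mA1 <-] [A2 mA2 <-]; exists (fun i => A1 i `&` A2 i).
    by move=> i; exact: measurableI.
  by apply/seteqP; split => y /= => [h|[h1 h2] i]; [split => i; case: (h i)|].
- by move=> _; exists (fun=> setT) => //; apply/seteqP.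
- by rewrite bigcup_const.
- by move=> B GB; apply: m12; rewrite inE.
Qed.

End tuple_cylinders.

Section independent_pair.
Context {dO dX dY : measure_display} {Om : measurableType dO} {TX : measurableType dX}
  {TY : measurableType dY} {R : realType} {P : probability Om R} {mu : probability TX R}
  {X : Om -> TX} {Y : Om -> TY}.
Hypotheses (mX : measurable_fun setT X) (mY : measurable_fun setT Y).
Local Open Scope ereal_scope.

Lemma pair_preimage_integral :
  (forall A B, measurable A -> measurable B ->
     P (X @^-1` A `&` Y @^-1` B) = mu A * P (Y @^-1` B)) ->
  forall C, measurable C ->
    P ((fun om => (X om, Y om)) @^-1` C) = \int[P]_om mu (ysection C (Y om)).
Proof.
move=> indepXY C mC.
pose Yf : {mfun Om >-> TY} := HB.pack Y (isMeasurableFun.Build _ _ _ _ _ mY).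
pose XY : {mfun Om >-> (TX * TY)%type} := HB.pack (fun om => (X om, Y om))
  (isMeasurableFun.Build _ _ _ _ _ (measurable_fun_pair mX mY)).
have law_XY A B : measurable A -> measurable B ->
    distribution P XY (A `*` B) = mu A * distribution P Yf B.
  by move=> mA mB; rewrite -indepXY.
transitivity (distribution P XY C) => //.
rewrite -(product_measure_unique law_XY mC) (@product_measure_unique _ _ _ _ _ _ _
  (mu \x^ distribution P Yf)) // => [|A B mA mB]; last exact: product_measure2E.
transitivity (\int[distribution P Yf]_y mu (ysection C y)) => //.
by rewrite ge0_integral_distribution //; exact: measurable_fun_ysection.
Qed.

End independent_pair.

Section features.
Context {R : realType} {d : nat} {dT : measure_display} {T : measurableType dT}
  (feat : T -> 'cV[R]_d).
Hypothesis hfeat : forall i : 'I_d, measurable_fun setT (fun z => feat z i ord0).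

Definition feat_mx n (y : n.-tuple T) : 'M[R]_(n, d) := \matrix_(i < n) (feat (tnth y i))^T.

Definition notin_span n : set (T * n.-tuple T) :=
  [set p | ~~ ((feat p.1)^T <= feat_mx p.2)%MS].

Lemma measurable_feat : measurable_mx feat.
Proof. by move=> i j; rewrite ord1. Qed.

Lemma measurable_notin_span n : measurable (@notin_span n).
Proof.
rewrite /notin_span; under eq_set do rewrite notsubmx_rank_col_mx.
have mV : measurable_mx (fun p : T * n.-tuple T => feat_mx p.2).
  move=> i j; under eq_fun do rewrite !mxE.
  exact: measurableT_comp (hfeat j) (measurableT_comp (measurable_tnth i) measurable_snd).
apply: measurable_rank_lt mV (measurable_mx_col_mx mV _) => i j.
under eq_fun do rewrite mxE.
exact: measurableT_comp (measurable_feat j i) measurable_fst.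
Qed.

Lemma measurable_ysection_notin_span n (y : n.-tuple T) :
  measurable (ysection (@notin_span n) y).
Proof. by have := measurable_notin_span (n:=n); exact: measurable_ysection. Qed.

Lemma measurable_disagree k (M : 'M[R]_d) (W WM : 'M[R]_(d, k)) :
  measurable (disagree feat M W WM).
Proof.
have -> : disagree feat M W WM = [set z | (WM^T *m M - W^T) *m feat z != 0].
  by apply/seteqP; split => z /=; rewrite mulmxBl -mulmxA subr_eq0.
exact/measurable_mx_neq0/measurable_mx_mulmx/measurable_feat.
Qed.

End features.
Arguments notin_span {R d dT T} feat {n}.

Section markov_tail.
Context {d : measure_display} {T : measurableType d} {R : realType} (P : probability T R).
Local Open Scope ereal_scope.

Lemma markov_prob_le (f : T -> \bar R) (b c : R) :
  (0 < c)%R -> measurable_fun setT f -> (forall x, 0 <= f x) ->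
  \int[P]_x f x <= b%:E -> (1 - b / c)%:E <= P [set x | f x <= c%:E].
Proof.
move=> c_gt0 mf f_ge0 int_le.
have mgt : measurable [set x | c%:E < f x].
  by rewrite -[X in measurable X]setTI; exact: emeasurable_fun_o_infty.
have -> : [set x | f x <= c%:E] = ~` [set x | c%:E < f x].
  by apply/seteqP; split => x /=; rewrite leNgt => /negP.
rewrite probability_setC // -[P _]fineK ?fin_num_measure // -EFinB lee_fin.
rewrite lerD2l lerN2 ler_pdivlMr // mulrC -lee_fin EFinM fineK ?fin_num_measure //.
have markov := le_integral_comp_abse P measurableT (@measurable_id _ _ setT)
  (fun r r_ge0 => r_ge0) (fun r s _ _ => id) mf c_gt0.
have absE : \int[P]_x `|f x| = \int[P]_x f x.
  by apply: eq_integral => x _; rewrite gee0_abs.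
apply: le_trans (le_trans _ markov) _; last by rewrite absE.
rewrite lee_pmul2l ?lte_fin // ?fin_num_measure //; apply: le_measure; rewrite ?inE //.
- rewrite setTI (_ : [set x | _ <= `|f x|] = [set x | c%:E <= f x]).
    by rewrite -[X in measurable X]setTI; exact: emeasurable_fun_c_infty.
  by apply/seteqP; split => x /=; rewrite gee0_abs.
- by move=> x /= c_lt; split => //; rewrite gee0_abs // ltW.
Qed.

End markov_tail.

Section samples.
Context {R : realType} {dT : measure_display} {T : measurableType dT}
  (mu : probability T R) {dO : measure_display} {Om : measurableType dO}
  (P : probability Om R) {m : nat} (Z : 'I_m -> Om -> T)
  {d : nat} (feat : T -> 'cV[R]_d).
Hypothesis hfeat : forall i : 'I_d, measurable_fun setT (fun z => feat z i ord0).
Hypotheses (hZmeas : forall i, measurable_fun setT (Z i))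
  (hZlaw : forall i (A : set T), measurable A -> P (Z i @^-1` A) = mu A)
  (hZind : mutually_independent P Z).
Local Open Scope ereal_scope.

(* The first t samples, or all of them when t > m, so that prefixes of every
   length t share one definition. *)
Definition sample_prefix t om : (minn t m).-tuple T :=
  [tuple Z (widen_ord (geq_minr t m) i) om | i < minn t m].

Lemma measurable_sample_prefix t : measurable_fun setT (sample_prefix t).
Proof.
apply/measurable_fun_tnthP => i.
rewrite (_ : _ \o _ = Z (widen_ord (geq_minr t m) i)); first exact: hZmeas.
by apply/funext => om /=; rewrite tnth_mktuple.
Qed.

Lemma prob_bigcap_samples (A : 'I_m -> set T) : (forall j, measurable (A j)) ->
  P (\bigcap_(j in [set: 'I_m]) (Z j @^-1` A j)) = \prod_(j < m) mu (A j).
Proof. by move=> mA; rewrite hZind //; apply: eq_bigr => j _; exact: hZlaw. Qed.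

Lemma sample_indep_cylinder (t : 'I_m) A B : measurable A -> (forall i, measurable (B i)) ->
  P (Z t @^-1` A `&` sample_prefix t @^-1` cylinder B) =
  mu A * P (sample_prefix t @^-1` cylinder B).
Proof.
move=> mA mB.
pose AB (b : bool) (j : 'I_m) :=
  if (j < minn t m)%N then B j else if b && (j == t) then A else setT.
have ABt b : AB b t = if b then A else setT.
  by rewrite /AB ltnNge geq_minl /= eqxx andbT.
have capE b : \bigcap_(j in [set: 'I_m]) (Z j @^-1` AB b j) =
    (if b then Z t @^-1` A else setT) `&` sample_prefix t @^-1` cylinder B.
  apply/seteqP; split => om /= => [ABZ|[Aom BY] j _].
    split; first by move: (ABZ t I); rewrite /= ABt; case: (b).
    move=> i; have := ABZ (widen_ord (geq_minr t m) i) I.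
    by rewrite /AB /= ltn_ord tnth_mktuple.
  rewrite /AB; case: ifPn => [jt|_]; last by case: b Aom => //; case: eqP => // ->.
  have := BY (Ordinal jt); rewrite tnth_mktuple (_ : widen_ord _ _ = j) //.
  exact: val_inj.
(* Both events factor by mutual independence; dropping the constraint on Z t
   (b = false) only changes the factor mu A into 1. *)
have probE b : P (\bigcap_(j in [set: 'I_m]) (Z j @^-1` AB b j)) =
    (if b then mu A else 1) * \prod_(j < m | j != t) mu (AB false j).
  rewrite prob_bigcap_samples => [|j]; last by rewrite /AB; case: ifP => // _; case: ifP.
  rewrite (bigD1 t) //= ABt; congr (_ * _); first by case: b; rewrite ?probability_setT.
  by apply: eq_bigr => j jt; rewrite /AB (negbTE jt) !andbF.
have := probE true; have := probE false; rewrite !capE /= setTI mul1e => PY PZY.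
by rewrite PZY PY.
Qed.

Lemma sample_indep (t : 'I_m) A B : measurable A -> measurable B ->
  P (Z t @^-1` A `&` sample_prefix t @^-1` B) = mu A * P (sample_prefix t @^-1` B).
Proof.
move=> mA mB.
have mZA : measurable (Z t @^-1` A) by rewrite -[X in measurable X]setTI; exact: hZmeas.
pose muA : {nonneg R} := NngNum (fine_ge0 (measure_ge0 mu A)).
(* The measure structure of a pushforward takes the measurability proof as an
   explicit argument, which canonical structures cannot infer. *)
pose push (nu : {measure set Om -> \bar R}) :=
  measure_function_pushforward__canonical__measure_function_Measure nu
    (measurable_sample_prefix t).
pose m1 := push (mrestr P mZA).
pose m2 : {measure set _ -> \bar R} := mscale muA (push P).
have m1E B' : m1 B' = P (Z t @^-1` A `&` sample_prefix t @^-1` B').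
  by rewrite /m1 /= /pushforward /mrestr setIC.
have m2E B' : m2 B' = mu A * P (sample_prefix t @^-1` B').
  by rewrite /m2 /= /mscale /= fineK ?fin_num_measure.
rewrite -m1E -m2E; apply: tuple_measure_unique mB.
  by rewrite m1E preimage_setT setIT (le_lt_trans (probability_le1 _ mZA)) ?ltry.
by move=> _ /[!inE] -[C mC <-]; rewrite m1E m2E sample_indep_cylinder.
Qed.

Lemma sample_pair_preimage (t : 'I_m) C : measurable C ->
  P ((fun om => (Z t om, sample_prefix t om)) @^-1` C) =
  \int[P]_om mu (ysection C (sample_prefix t om)).
Proof.
by move=> mC; apply: (pair_preimage_integral (hZmeas t) (measurable_sample_prefix t)
  (sample_indep t)).
Qed.

Definition unspanned_mass (t : nat) (om : Om) : \bar R :=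
  mu (ysection (notin_span feat) (sample_prefix t om)).

Definition novel (t : 'I_m) om : bool :=
  ~~ ((feat (Z t om))^T <= feat_mx feat (sample_prefix t om))%MS.

Lemma measurable_unspanned_mass t : measurable_fun setT (unspanned_mass t).
Proof.
have mN := measurable_notin_span feat hfeat (n:=minn t m).
exact: measurableT_comp (measurable_fun_ysection mu mN) (measurable_sample_prefix t).
Qed.

Lemma measurable_novel (t : 'I_m) : measurable [set om | novel t om].
Proof.
have := measurable_fun_pair (hZmeas t) (measurable_sample_prefix t) measurableT
  (measurable_notin_span feat hfeat (n:=minn t m)).
by rewrite setTI.
Qed.

Lemma novel_indic (t : 'I_m) om : (novel t om)%:R = \1_[set om | novel t om] om :> R.
Proof.
by rewrite indicE (_ : (om \in _) = novel t om) //; apply/idP/idP => [/set_mem|/mem_set].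
Qed.

Lemma integral_novel (t : 'I_m) :
  \int[P]_om (novel t om)%:R%:E = \int[P]_om unspanned_mass t om.
Proof.
under eq_integral do rewrite novel_indic.
rewrite integral_indic // ?setIT; last exact: measurable_novel.
exact: sample_pair_preimage (measurable_notin_span feat hfeat (n:=minn t m)).
Qed.

Lemma feat_mx_sample_prefix_mono t s om : (t <= s)%N ->
  (feat_mx feat (sample_prefix t om) <= feat_mx feat (sample_prefix s om))%MS.
Proof.
move=> le_ts; have le_min : (minn t m <= minn s m)%N.
  by rewrite leq_min geq_minr (leq_trans (geq_minl _ _)).
apply/row_subP => i; apply: (eq_row_sub (widen_ord le_min i)).
by rewrite !rowK !tnth_mktuple; congr (feat (Z _ om))^T; exact: val_inj.
Qed.

Lemma feat_sample_sub_prefix_succ (t : 'I_m) om :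
  ((feat (Z t om))^T <= feat_mx feat (sample_prefix t.+1 om))%MS.
Proof.
have t_lt : (t < minn t.+1 m)%N by rewrite leq_min leqnn ltn_ord.
apply: (eq_row_sub (Ordinal t_lt)).
by rewrite rowK tnth_mktuple; congr (feat (Z _ om))^T; exact: val_inj.
Qed.

Lemma sum_novel_le_rank om :
  (\sum_(t < m) novel t om <= \rank (feat_mx feat (sample_prefix m om)))%N.
Proof.
apply: (@sum_notsub_le_rank _ _ (minn^~ m) (fun t => feat_mx feat (sample_prefix t om)))
  => t.
  exact: feat_mx_sample_prefix_mono.
exact: feat_sample_sub_prefix_succ.
Qed.

Lemma le_unspanned_mass t s om : (t <= s)%N -> unspanned_mass s om <= unspanned_mass t om.
Proof.
move=> le_ts; apply: le_measure; rewrite ?inE; try exact: measurable_ysection_notin_span.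
move=> x; rewrite /ysection /= !in_setE /notin_span /=.
by apply: contra => /submx_trans; apply; exact: feat_mx_sample_prefix_mono.
Qed.

Lemma sum_novel_add_unspanned_mass_le om :
  \sum_(t < m) (novel t om)%:R%:E + unspanned_mass m om <= d%:R%:E.
Proof.
rewrite sumEFin -natr_sum.
have := sum_novel_le_rank om; set V := feat_mx feat _ => le_rank.
have [rank_lt|rank_ge] := ltnP (\rank V) d.
  have mass_le1 : unspanned_mass m om <= 1.
    by apply: probability_le1; exact: measurable_ysection_notin_span.
  apply: le_trans (leeD2l _ mass_le1) _.
  by rewrite -EFinD lee_fin natr1 ler_nat (leq_ltn_trans le_rank).
have V_full : row_full V by rewrite /row_full eqn_leq rank_leq_col.
rewrite /unspanned_mass (_ : ysection _ _ = set0) ?measure0 ?adde0 ?lee_fin ?ler_nat.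
  exact: leq_trans le_rank (rank_leq_col V).
apply/seteqP; split => x //=.
by rewrite /ysection /= in_setE /notin_span /= submx_full.
Qed.

Lemma expected_unspanned_mass_le :
  m.+1%:R%:E * \int[P]_om unspanned_mass m om <= d%:R%:E.
Proof.
have mass_ge0 t om : 0 <= unspanned_mass t om by exact: measure_ge0.
have mmass t : measurable_fun setT (unspanned_mass t) := measurable_unspanned_mass t.
have mnovel (t : 'I_m) : measurable_fun setT (fun om => (novel t om)%:R%:E : \bar R).
  under eq_fun do rewrite novel_indic.
  by apply/measurable_EFinP; apply: measurable_indic; exact: measurable_novel.
have count_ge0 om : 0 <= \sum_(t < m) (novel t om)%:R%:E.
  by apply: sume_ge0 => t _; rewrite lee_fin.
set I := \int[P]_om unspanned_mass m om.
have -> : m.+1%:R%:E * I = \sum_(t < m) I + I.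
  by rewrite mule_natl -[_ *+ _]/((_ *+ _)%R) mulrSr sumr_const card_ord.
apply: (@le_trans _ _ (\sum_(t < m) \int[P]_om unspanned_mass t om + I)).
  apply/leeD2r/lee_sum => t _; apply: ge0_le_integral => // om _.
  exact/le_unspanned_mass/ltnW.
under eq_bigr do rewrite -integral_novel.
rewrite -ge0_integral_sum //.
rewrite -ge0_integralD //; last exact: emeasurable_sum.
apply: le_trans (_ : \int[P]_om d%:R%:E <= _).
  apply: ge0_le_integral => //; first by move=> om _; exact: adde_ge0.
    exact/emeasurable_funD/mmass/emeasurable_sum.
  by move=> om _; exact: sum_novel_add_unspanned_mass_le.
by rewrite integral_cst // -[leRHS]mule1 lee_wpmul2l ?lee_fin ?ler0n ?probability_le1.
Qed.

Lemma prob_unspanned_mass_le (delta : R) : (0 < delta)%R ->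
  (1 - delta)%:E <= P [set om | unspanned_mass m om <= (d%:R / (delta * m.+1%:R))%:E].
Proof.
move=> delta_gt0; have [d0|d_gt0] := posnP d.
  rewrite (_ : [set _ | _] = setT) ?probability_setT ?lee_fin ?gerBl ?ltW //.
  apply/seteqP; split => // om _ /=.
  apply: le_trans (le_trans _ (sum_novel_add_unspanned_mass_le om)) _.
    by apply: leeDr; apply: sume_ge0 => t _; rewrite lee_fin.
  by rewrite d0 mul0r.
have delta_ratio : (d%:R / m.+1%:R / (d%:R / (delta * m.+1%:R)) = delta)%R.
  by field; rewrite ?pnatr_eq0 -?lt0n ?d_gt0 ?lt0r_neq0.
rewrite -[X in (1 - X)%R]delta_ratio; apply: markov_prob_le => //.
- by rewrite divr_gt0 ?mulr_gt0 ?ltr0n.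
- exact: measurable_unspanned_mass.
by rewrite mulrC EFinM lee_pdivlMl ?ltr0n //; exact: expected_unspanned_mass_le.
Qed.

Lemma disagree_sub_notin_span om k (M : 'M[R]_d) (W WM : 'M[R]_(d, k)) :
  (forall i, WM^T *m (M *m feat (Z i om)) = W^T *m feat (Z i om)) ->
  disagree feat M W WM `<=` ysection (notin_span feat) (sample_prefix m om).
Proof.
move=> agree x; rewrite /ysection /= in_setE /notin_span /=; apply: contra => in_span.
rewrite mulmxA -subr_eq0 -mulmxBl; apply/eqP/(mulmx_eq0_rowspace _ in_span).
apply/row_matrixP => i; rewrite row_mul rowK tnth_mktuple row0 -trmx_mul.
by rewrite mulmxBl -mulmxA agree subrr trmx0.
Qed.

End samples.

Theorem lemma1 (R : realType) (d m : nat)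
  (dT : measure_display) (T : measurableType dT) (Y : Type)
  (feat : T -> 'cV[R]_d) (lab : T -> Y)
  (hfeat : forall i : 'I_d, measurable_fun setT (fun z => feat z i ord0))
  (mu : probability T R)
  (dO : measure_display) (Om : measurableType dO) (P : probability Om R)
  (Z : 'I_m -> Om -> T)
  (hZmeas : forall i, measurable_fun setT (Z i))
  (hZlaw : forall i (A : set T), measurable A -> P (Z i @^-1` A) = mu A)
  (hZind : mutually_independent P Z)
  (delta : R) (hdelta : 0 < delta < 1) :
  exists E : set Om, measurable E /\ ((1 - delta)%:E <= P E)%E /\
    forall om, E om ->
      let S := [seq (feat (Z i om), lab (Z i om)) | i <- enum 'I_m] in
      forall (k : nat) (Xi Out : Type) (A : algorithm R d k Y Xi Out)
             (M : 'M[R]_d) (xi : Xi),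
        ((linearly_invariant A /\ M \in unitmx) \/
         (orthogonally_invariant A /\ orthogonal_mx M)) ->
        (mu (disagree feat M (A xi S).2 (A xi (transform_data M S)).2)
          <= (d%:R / (delta * m.+1%:R))%:E)%E.
Proof.
case/andP: hdelta => delta_gt0 _.
pose c := d%:R / (delta * m.+1%:R).
exists [set om | (unspanned_mass mu Z feat m om <= c%:E)%E]; split.
  rewrite -[X in measurable X]setTI; apply: emeasurable_fun_infty_c => //.
  exact: measurable_unspanned_mass.
split; first exact: prob_unspanned_mass_le.
move=> om mass_le S k Xi Out A M xi inv_A.
have inv_AM : invariant_for A M by case: inv_A => -[inv_AM M_ok]; exact: inv_AM.
have [_ agree_S] := inv_AM xi S.
apply: le_trans mass_le; apply: le_measure; rewrite ?inE.
- exact: measurable_disagree.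
- exact: measurable_ysection_notin_span.
apply: disagree_sub_notin_span => i; apply: agree_S.
by rewrite -map_comp; apply: map_f; rewrite mem_enum.
Qed.
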